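(* Let $\{p^\circ_{(R,\alpha)}\}_{(R,\alpha)}$ be a replacement rule satisfying the Fixation Axiom and representing neutral drift, and consider the evolutionary Markov chain with $u=0$. Then for every state $\mathbf{x}\in\{0,1\}^G$, $$\lim_{t\to\infty}P^{(t)}_{\mathbf{x}\to\mathbf{A}}=\hat x.$$ In particular, for each $g\in G$, $\lim_{t\to\infty}P^{(t)}_{\mathbf{1}_{\{g\}}\to\mathbf{A}}=v_g/n$, and $\rho_A=\rho_a=\dfrac{\hat b^\circ}{n\,b^\circ}$.
   Context: Setting. $G$ is a finite nonempty set of genetic sites, $n=|G|$. A state is $\mathbf{x}\in\{0,1\}^G$ ($x_g=1$: allele $A$ at $g$; $0$: allele $a$). For $S\subseteq G$, $\mathbf{1}_S$ has $x_g=1$ iff $g\in S$; $\mathbf{a}=\mathbf{1}_\emptyset$, $\mathbf{A}=\mathbf{1}_G$. A replacement event is $(R,\alpha)$ with $R\subseteq G$, $\alpha:R\to G$. A replacement rule representing neutral drift is a single probability distribution $\{p^\circ_{(R,\alpha)}\}$ over events, used in every state. The evolutionary Markov chain with $u=0$ moves from $\mathbf{x}$ by drawing $(R,\alpha)$ with probability $p^\circ_{(R,\alpha)}$ and setting $x'_g=x_{\alpha(g)}$ for $g\in R$, $x'_g=x_g$ for $g\notin R$; $P^{(t)}_{\mathbf{x}\to\mathbf{y}}$ are $t$-step transition probabilities. Fixation Axiom: there exist $g\in G$, $m\ge1$, events $(R_k,\alpha_k)_{k=1}^m$ with $p^\circ_{(R_k,\alpha_k)}>0$, $g\in R_k$ for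 some $k$, and $\tilde\alpha_1\circ\cdots\circ\tilde\alpha_m(h)=g$ for all $h$, where $\tilde\alpha_k$ equals $\alpha_k$ on $R_k$ and the identity elsewhere. Quantities: $e^\circ_{gh}=\sum_{(R,\alpha):h\in R,\alpha(h)=g}p^\circ_{(R,\alpha)}$, $d^\circ_g=\sum_he^\circ_{hg}$, $b^\circ=\sum_{g,h}e^\circ_{gh}$. Reproductive values $(v_g)$: the unique solution of $d^\circ_gv_g=\sum_he^\circ_{gh}v_h$ for all $g$ and $\sum_gv_g=n$. $\hat x=\frac1n\sum_gv_gx_g$, $\hat b^\circ=\sum_{g,h}e^\circ_{gh}v_h$. Mutant appearance distributions: $\mu_A(\mathbf{1}_{\{g\}})=d^\circ_g/b^\circ$ (zero on other states), $\mu_a(\mathbf{1}_{G\setminus\{g\}})=d^\circ_g/b^\circ$ (zero elsewhere); $\rho_A=\sum_\mathbf{x}\mu_A(\mathbf{x})\lim_tP^{(t)}_{\mathbf{x}\to\mathbf{A}}$, $\rho_a=\sum_\mathbf{x}\mu_a(\mathbf{x})\lim_tP^{(t)}_{\mathbf{x}\to\mathbf{a}}$. *)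

From HB Require Import structures.
From mathcomp Require Import all_boot all_order all_algebra.
From mathcomp Require Import all_classical all_reals all_analysis.
Set Implicit Arguments. Unset Strict Implicit. Unset Printing Implicit Defensive.
Import Order.TTheory GRing.Theory Num.Theory.
Import numFieldTopology.Exports numFieldNormedType.Exports.
Local Open Scope ring_scope.
Local Open Scope classical_set_scope.
Local Open Scope ring_scope.

Section Evo.
Variables (R : realType) (G : finType).

(* A state x in {0,1}^G: x g = true means allele A at site g. *)
Definition state := {ffun G -> bool}.

(* A replacement event (R, alpha) with R ⊆ G, alpha : R -> G is encoded as
   e : G -> option G, with R = {g | e g <> None} and alpha g = h iff e g = Some h. *)
Definition event := {ffun G -> option G}.

Definition step (e : event) (x : state) : state :=
  [ffun g => match e g with Some h => x h | None => x g end].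

Definition ind (S : {set G}) : state := [ffun g => g \in S].
Definition allA : state := ind [set: G]%SET.
Definition alla : state := ind (@finset.set0 G).

Variable p : event -> R.

Definition P1 (x y : state) : R := \sum_(e : event | step e x == y) p e.

Fixpoint Pt (t : nat) (x y : state) : R :=
  match t with
  | 0 => (x == y)%:R
  | t'.+1 => \sum_(z : state) P1 x z * Pt t' z y
  end.

Definition etilde (e : event) (h : G) : G :=
  match e h with Some j => j | None => h end.

Definition fixation_axiom : Prop :=
  exists (g : G) (s : seq event),
    [/\ (0 < size s)%N,
        all (fun e : event => 0 < p e) s,
        has (fun e : event => e g != None) s &
        forall h, foldr (fun (e : event) (f : G -> G) => etilde e \o f) id s h = g].

Definition emat (g h : G) : R := \sum_(e : event | e h == Some g) p e.
Definition dval (g : G) : R := \sum_(h : G) emat h g.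
Definition btot : R := \sum_(g : G) \sum_(h : G) emat g h.

Definition is_repro (v : G -> R) : Prop :=
  (forall g, dval g * v g = \sum_(h : G) emat g h * v h) /\
  \sum_(g : G) v g = #|G|%:R.

Definition xhat (v : G -> R) (x : state) : R :=
  #|G|%:R^-1 * \sum_(g : G) v g * (x g)%:R.
Definition bhat (v : G -> R) : R := \sum_(g : G) \sum_(h : G) emat g h * v h.

Definition muA (x : state) : R :=
  \sum_(g : G) (x == ind [set g]%SET)%:R * (dval g / btot).
Definition mua (x : state) : R :=
  \sum_(g : G) (x == ind (~: [set g]%SET))%:R * (dval g / btot).

Definition rhoA : R :=
  \sum_(x : state) muA x * lim ((fun t => Pt t x allA) @ \oo).
Definition rhoa : R :=
  \sum_(x : state) mua x * lim ((fun t => Pt t x alla) @ \oo).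

End Evo.

From HB Require Import structures.
From mathcomp Require Import all_boot all_order all_algebra.
From mathcomp Require Import all_classical all_reals all_analysis.
From mathcomp Require Import ring lra zify.
Set Implicit Arguments. Unset Strict Implicit. Unset Printing Implicit Defensive.
Import Order.TTheory GRing.Theory Num.Theory.
Import numFieldTopology.Exports numFieldNormedType.Exports.
Local Open Scope ring_scope.
Local Open Scope classical_set_scope.

(* Reproductive values make x^ harmonic for the chain: if the offspring of h
   replaces g, then n x^ changes by v_g (x_h - x_g), and the equations
   d_g v_g = sum_h e_gh v_h make these changes cancel on average.  Hence
   sum_y P^(t)(x -> y) x^(y) = x^(x) for every t.  The fixation axiom gives a
   fixed sequence of m events of total probability d > 0 that sends every
   state to A or to a, so the probability of still being polymorphic after
   k m steps is at most (1 - d)^k.  As x^(A) = 1 and x^(a) = 0, letting t grow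
   gives P^(t)(x -> A) -> x^(x) and P^(t)(x -> a) -> 1 - x^(x).  Then rho_A
   and rho_a are both the average of v_g / n with weights d_g / b, which the
   same equations turn into b^ / (n b). *)

Lemma sum_mixture (R : ringType) (I T : finType) (a : I -> T) (w : I -> R)
    (f : T -> R) :
  \sum_(x : T) (\sum_(i : I) (x == a i)%:R * w i) * f x = \sum_(i : I) w i * f (a i).
Proof.
under eq_bigr do rewrite mulr_suml.
rewrite exchange_big /=; apply: eq_bigr => i _.
rewrite (bigD1 (a i)) //= eqxx mul1r big1 ?addr0 // => x /negbTE ->.
by rewrite !mul0r.
Qed.

Lemma cvg_divn (m : nat) : (0 < m)%N -> (fun t => (t %/ m)%N) @ \oo --> \oo.
Proof.
move=> m_gt0; apply/cvgnyPge => k; near=> t; rewrite leq_divRL //.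
near: t; exact: nbhs_infty_ge.
Unshelve. all: end_near. Qed.

Section NeutralDrift.
Variables (R : realType) (G : finType) (p : event G -> R).
Hypotheses (p_ge0 : forall e, 0 <= p e) (p_sum1 : \sum_(e : event G) p e = 1).

Lemma P1_ge0 x y : 0 <= P1 p x y.
Proof. exact: sumr_ge0. Qed.

Lemma Pt_ge0 t x y : 0 <= Pt p t x y.
Proof.
elim: t x => [|t IH] x /=; first by rewrite ler0n.
by apply: sumr_ge0 => z _; rewrite mulr_ge0 ?P1_ge0.
Qed.

Lemma sum_P1_mul x (f : state G -> R) :
  \sum_(z : state G) P1 p x z * f z = \sum_(e : event G) p e * f (step e x).
Proof.
under eq_bigr do rewrite mulr_suml.
rewrite (exchange_big_dep predT) //=; apply: eq_bigr => e _.
by rewrite (big_pred1 (step e x)) // => z; rewrite eq_sym.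
Qed.

Lemma PtD s t x y :
  Pt p (s + t) x y = \sum_(z : state G) Pt p s x z * Pt p t z y.
Proof.
elim: s x => [|s IH] x /=.
  rewrite (bigD1 x) //= eqxx mul1r big1 ?addr0 // => z /negbTE.
  by rewrite eq_sym => ->; rewrite mul0r.
under eq_bigr do rewrite IH mulr_sumr.
rewrite exchange_big /=; apply: eq_bigr => w _.
by rewrite mulr_suml; apply: eq_bigr => z _; rewrite mulrA.
Qed.

Lemma Pt_harmonic (f : state G -> R) :
    (forall x, \sum_(z : state G) P1 p x z * f z = f x) ->
  forall t x, \sum_(y : state G) Pt p t x y * f y = f x.
Proof.
move=> f_harm; elim=> [|t IH] x /=.
  rewrite (bigD1 x) //= eqxx mul1r big1 ?addr0 // => y /negbTE.
  by rewrite eq_sym => ->; rewrite mul0r.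
under eq_bigr do rewrite mulr_suml.
rewrite exchange_big /= -[RHS]f_harm; apply: eq_bigr => z _.
by rewrite -IH mulr_sumr; apply: eq_bigr => y _; rewrite mulrA.
Qed.

Lemma sum_Pt t x : \sum_(y : state G) Pt p t x y = 1.
Proof.
have one_harm z : \sum_(w : state G) P1 p z w * 1 = 1.
  by rewrite sum_P1_mul; under eq_bigr do rewrite mulr1.
rewrite -[RHS](Pt_harmonic one_harm t x).
by apply: eq_bigr => y _; rewrite mulr1.
Qed.

Lemma Pt_absorbing a t y :
  (forall e, step e a = a) -> Pt p t a y = (a == y)%:R.
Proof.
move=> a_fixed; elim: t => [|t IH] //=.
rewrite (sum_P1_mul a (fun z => Pt p t z y)).
under eq_bigr do rewrite a_fixed IH.
by rewrite -mulr_suml p_sum1 mul1r.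
Qed.

Lemma step_etilde (e : event G) (x : state G) (g : G) : step e x g = x (etilde e g).
Proof. by rewrite ffunE /etilde; case: (e g). Qed.

Lemma step_allA e : step e (allA G) = allA G.
Proof. by apply/ffunP => g; rewrite step_etilde !ffunE !inE. Qed.

Lemma step_alla e : step e (alla G) = alla G.
Proof. by apply/ffunP => g; rewrite step_etilde !ffunE !inE. Qed.

Definition run (s : seq (event G)) (x : state G) : state G :=
  foldl (fun y e => step e y) x s.

Lemma runE s x :
  run s x = [ffun g => x (foldr (fun e (f : G -> G) => etilde e \o f) id s g)].
Proof.
elim: s x => [|e s IH] x /=; first by apply/ffunP => g; rewrite ffunE.
rewrite /run /= -/(run s _) IH; apply/ffunP => g.
by rewrite ffunE step_etilde ffunE.
Qed.

Lemma Pt_run s x : \prod_(e <- s) p e <= Pt p (size s) x (run s x).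
Proof.
elim: s x => [|e s IH] x /=; first by rewrite big_nil eqxx.
rewrite big_cons (bigD1 (step e x)) //= -[leLHS]addr0 lerD //; last first.
  by apply: sumr_ge0 => z _; rewrite mulr_ge0 ?P1_ge0 ?Pt_ge0.
apply: ler_pM; rewrite ?prodr_ge0 ?IH //.
by rewrite /P1 (bigD1 e) //= lerDl sumr_ge0.
Qed.

Definition polymorphic (y : state G) := (y != allA G) && (y != alla G).

Definition polymass t x := \sum_(y | polymorphic y) Pt p t x y.

Lemma allA_neq_alla : (0 < #|G|)%N -> allA G != alla G.
Proof.
case/card_gt0P => g _; apply/eqP => /(congr1 (fun x : state G => x g)).
by rewrite !ffunE !inE.
Qed.

Lemma sum_state_split (F : state G -> R) : (0 < #|G|)%N ->
  \sum_(y : state G) F y = F (allA G) + F (alla G) + \sum_(y | polymorphic y) F y.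
Proof.
move=> /allA_neq_alla Aa; rewrite (bigD1 (allA G)) //= (bigD1 (alla G)) //=.
  by rewrite addrA.
by rewrite eq_sym.
Qed.

Lemma polymass_ge0 t x : 0 <= polymass t x.
Proof. by apply: sumr_ge0 => y _; apply: Pt_ge0. Qed.

Lemma polymassE t x : (0 < #|G|)%N ->
  polymass t x = 1 - Pt p t x (allA G) - Pt p t x (alla G).
Proof. by move=> G_gt0; rewrite /polymass -(sum_Pt t x) (sum_state_split _ G_gt0); ring. Qed.

Lemma polymass_monomorphic t y : ~~ polymorphic y -> polymass t y = 0.
Proof.
move=> /nandP[] /negPn/eqP ->; apply: big1 => z /andP[zA za].
- by rewrite Pt_absorbing 1?eq_sym ?(negbTE zA) //; apply: step_allA.
- by rewrite Pt_absorbing 1?eq_sym ?(negbTE za) //; apply: step_alla.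
Qed.

Lemma polymassD s t x :
  polymass (s + t) x = \sum_(z | polymorphic z) Pt p s x z * polymass t z.
Proof.
rewrite /polymass; under eq_bigr do rewrite PtD.
rewrite exchange_big (bigID polymorphic) /= [X in _ + X]big1 ?addr0 => [|z z_mono].
- by apply: eq_bigr => z _; rewrite mulr_sumr.
- by rewrite -mulr_sumr -/(polymass t z) polymass_monomorphic ?mulr0.
Qed.

Lemma p_le1 e : p e <= 1.
Proof. by rewrite -p_sum1 (bigD1 e) //= lerDl sumr_ge0. Qed.

Lemma prod_p_le1 (s : seq (event G)) : \prod_(e <- s) p e <= 1.
Proof. by apply: prodr_ile1 => e _; rewrite p_ge0 p_le1. Qed.

Lemma prod_p_gt0 (s : seq (event G)) :
  all (fun e => 0 < p e) s -> 0 < \prod_(e <- s) p e.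
Proof. by move=> s_pos; rewrite big_seq; apply: prodr_gt0 => e /(allP s_pos). Qed.

Section Fixation.
Variables (g0 : G) (s : seq (event G)).
Hypothesis s_fix : forall h, foldr (fun e (f : G -> G) => etilde e \o f) id s h = g0.

Let d := \prod_(e <- s) p e.

Lemma run_fixation x : run s x = if x g0 then allA G else alla G.
Proof. by rewrite runE; apply/ffunP => g; rewrite !ffunE s_fix; case: (x g0); rewrite !ffunE inE. Qed.

Hypothesis G_gt0 : (0 < #|G|)%N.

Lemma polymass_size x : polymass (size s) x <= 1 - d.
Proof.
rewrite polymassE //; have := Pt_run s x; rewrite run_fixation -/d.
have := Pt_ge0 (size s) x (allA G); have := Pt_ge0 (size s) x (alla G).
by case: (x g0) => /=; lra.
Qed.

Lemma polymass_decay k t x : (k * size s <= t)%N -> polymass t x <= (1 - d) ^+ k.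
Proof.
elim: k t x => [|k IH] t x le_t.
  rewrite expr0 polymassE //.
  by have := Pt_ge0 t x (allA G); have := Pt_ge0 t x (alla G); lra.
have le_st : (size s <= t)%N by move: le_t; rewrite mulSn; lia.
rewrite -(subnKC le_st) polymassD.
apply: (@le_trans _ _ (\sum_(z | polymorphic z) Pt p (size s) x z * (1 - d) ^+ k)).
  apply: ler_sum => z _; rewrite ler_wpM2l ?Pt_ge0 // IH //.
  by move: le_t; rewrite mulSn; lia.
rewrite -mulr_suml exprS; apply: ler_wpM2r (polymass_size x).
by rewrite exprn_ge0 // subr_ge0 prod_p_le1.
Qed.

End Fixation.

Lemma polymass_cvg0 x : (0 < #|G|)%N -> fixation_axiom p ->
  (fun t => polymass t x) @ \oo --> 0.
Proof.
move=> G_gt0 [g0 [s [s_gt0 s_pos _ s_fix]]].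
set d := \prod_(e <- s) p e.
have d_gt0 : 0 < d := prod_p_gt0 s_pos.
have d_le1 : d <= 1 := prod_p_le1 s.
apply: (@squeeze_cvgr _ _ _ _ (cst 0) (fun t => (1 - d) ^+ (t %/ size s))).
- near=> t; rewrite polymass_ge0 /=.
  exact: (polymass_decay s_fix G_gt0 x (leq_trunc_div t (size s))).
- exact: cvg_cst.
- apply: (cvg_comp _ _ (cvg_divn s_gt0)); apply: cvg_expr.
  by rewrite ger0_norm //; lra.
Unshelve. all: end_near. Qed.

Lemma Pt_polymorphic_cvg0 x y : (0 < #|G|)%N -> fixation_axiom p ->
  polymorphic y -> (fun t => Pt p t x y) @ \oo --> 0.
Proof.
move=> G_gt0 fixation y_poly.
apply: (@squeeze_cvgr _ _ _ _ (cst 0) (fun t => polymass t x)).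
- near=> t; rewrite Pt_ge0 /= /polymass (bigD1 y) //= lerDl.
  by apply: sumr_ge0 => z _; apply: Pt_ge0.
- exact: cvg_cst.
- exact: polymass_cvg0.
Unshelve. all: end_near. Qed.

Lemma sum_p_etilde (X : G -> R) g :
  \sum_(e : event G) p e * X (etilde e g) = X g + \sum_(h : G) emat p h g * (X h - X g).
Proof.
have etildeE e : X (etilde e g) = X g + \sum_(h : G) (e g == Some h)%:R * (X h - X g).
  rewrite /etilde; case: (e g) => [j|]; last by rewrite big1 ?addr0 // => h _; rewrite mul0r.
  rewrite (bigD1 j) //= eqxx mul1r big1 ?addr0 => [|h /negbTE hj]; first ring.
  by rewrite (inj_eq Some_inj) eq_sym hj mul0r.
under eq_bigr do rewrite etildeE mulrDr.
rewrite big_split /= -mulr_suml p_sum1 mul1r; congr (_ + _).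
under eq_bigr do rewrite mulr_sumr.
rewrite exchange_big /=; apply: eq_bigr => h _.
rewrite /emat mulr_suml [RHS]big_mkcond /=; apply: eq_bigr => e _.
by case: eqP => _ /=; rewrite ?mul1r ?mul0r ?mulr0.
Qed.

Lemma repro_expected_change v (X : G -> R) : is_repro p v ->
  \sum_(g : G) v g * \sum_(h : G) emat p h g * (X h - X g) = 0.
Proof.
case=> repro _; apply/eqP.
have -> : \sum_(g : G) v g * \sum_(h : G) emat p h g * (X h - X g) =
    \sum_(g : G) \sum_(h : G) emat p h g * v g * X h - \sum_(g : G) dval p g * v g * X g.
  rewrite -sumrB; apply: eq_bigr => g _.
  rewrite /dval !mulr_suml mulr_sumr -sumrB; apply: eq_bigr => h _; ring.
rewrite exchange_big /= subr_eq0; apply/eqP; apply: eq_bigr => h _.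
by rewrite repro !mulr_suml.
Qed.

Lemma xhat_harmonic v x : is_repro p v ->
  \sum_(z : state G) P1 p x z * xhat v z = xhat v x.
Proof.
move=> v_repro; rewrite sum_P1_mul /xhat.
under eq_bigr do rewrite mulrCA.
rewrite -mulr_sumr; congr (_ * _).
have -> : \sum_(e : event G) p e * \sum_(g : G) v g * (step e x g)%:R =
    \sum_(g : G) v g * \sum_(e : event G) p e * (x (etilde e g))%:R.
  under eq_bigr do rewrite mulr_sumr.
  rewrite exchange_big; apply: eq_bigr => g _ /=.
  by rewrite mulr_sumr; apply: eq_bigr => e _; rewrite step_etilde mulrCA.
under eq_bigr do rewrite (sum_p_etilde (fun h => (x h)%:R)) mulrDr.
by rewrite big_split /= repro_expected_change ?addr0.
Qed.

Lemma xhat_allA v : (0 < #|G|)%N -> is_repro p v -> xhat v (allA G) = 1.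
Proof.
move=> G_gt0 [_ v_sum]; rewrite /xhat.
under eq_bigr do rewrite ffunE inE mulr1.
by rewrite v_sum mulVf // pnatr_eq0 -lt0n.
Qed.

Lemma xhat_alla (v : G -> R) : xhat v (alla G) = 0.
Proof. by rewrite /xhat big1 ?mulr0 // => g _; rewrite ffunE inE mulr0. Qed.

Section Limits.
Variable v : G -> R.
Hypotheses (G_gt0 : (0 < #|G|)%N) (fixation : fixation_axiom p) (v_repro : is_repro p v).

Lemma Pt_allA_cvg x : (fun t => Pt p t x (allA G)) @ \oo --> xhat v x.
Proof.
have PtE t : Pt p t x (allA G) =
    xhat v x - \sum_(y | polymorphic y) Pt p t x y * xhat v y.
  rewrite -(Pt_harmonic (fun z => xhat_harmonic z v_repro) t x).
  by rewrite (sum_state_split _ G_gt0) xhat_allA // xhat_alla mulr1 mulr0 addr0 addrK.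
rewrite (funext PtE) -[X in _ --> X]subr0; apply: cvgB; first exact: cvg_cst.
have := @cvg_big R (state G) +%R 0 polymorphic add_continuous nat \oo
  (index_enum (state G)) (fun y t => Pt p t x y * xhat v y) (fun=> 0) _.
rewrite big1 //; apply=> y y_poly.
by rewrite -(mul0r (xhat v y)); apply: cvgMl; apply: Pt_polymorphic_cvg0.
Qed.

Lemma Pt_alla_cvg x : (fun t => Pt p t x (alla G)) @ \oo --> 1 - xhat v x.
Proof.
have PtE t : Pt p t x (alla G) = 1 - Pt p t x (allA G) - polymass t x.
  by rewrite polymassE //; ring.
rewrite (funext PtE) -[X in _ --> X]subr0; apply: cvgB; last exact: polymass_cvg0.
by apply: cvgB; [exact: cvg_cst | exact: Pt_allA_cvg].
Qed.

Lemma xhat_ind1 g : xhat v (ind [set g]) = v g / #|G|%:R.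
Proof.
rewrite /xhat mulrC (bigD1 g) //= big1 ?addr0 => [|h /negbTE hg].
  by rewrite ffunE inE eqxx mulr1.
by rewrite ffunE inE hg mulr0.
Qed.

Lemma xhat_indC1 g : 1 - xhat v (ind (~: [set g])) = v g / #|G|%:R.
Proof.
have n_neq0 : #|G|%:R != 0 :> R by rewrite pnatr_eq0 -lt0n.
rewrite /xhat.
have -> : \sum_(h : G) v h * (ind (~: [set g]) h)%:R = #|G|%:R - v g.
  rewrite -v_repro.2 (bigD1 g) //= [in RHS](bigD1 g) //= ffunE !inE eqxx mulr0 add0r.
  rewrite addrC addrK; apply: eq_bigr => h hg.
  by rewrite ffunE !inE hg mulr1.
by field.
Qed.

Lemma mutant_appearance_average :
  \sum_(g : G) dval p g / btot p * (v g / #|G|%:R) = bhat p v / (#|G|%:R * btot p).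
Proof.
rewrite /bhat mulr_suml; apply: eq_bigr => g _.
rewrite -v_repro.1 invfM; ring.
Qed.

Lemma rhoA_eq : rhoA p = bhat p v / (#|G|%:R * btot p).
Proof.
rewrite /rhoA; under eq_bigr => x _ do rewrite (cvg_lim (@Rhausdorff R) (Pt_allA_cvg (x := x))).
rewrite sum_mixture -mutant_appearance_average.
by apply: eq_bigr => g _; rewrite xhat_ind1.
Qed.

Lemma rhoa_eq : rhoa p = bhat p v / (#|G|%:R * btot p).
Proof.
rewrite /rhoa; under eq_bigr => x _ do rewrite (cvg_lim (@Rhausdorff R) (Pt_alla_cvg (x := x))).
rewrite sum_mixture -mutant_appearance_average.
by apply: eq_bigr => g _; rewrite xhat_indC1.
Qed.

End Limits.

End NeutralDrift.

Theorem theorem7 (R : realType) (G : finType) (p : event G -> R) (v : G -> R) :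
  (0 < #|G|)%N ->
  (forall e, 0 <= p e) ->
  \sum_(e : event G) p e = 1 ->
  fixation_axiom p ->
  is_repro p v ->
  [/\ (forall x : state G,
         (fun t => Pt p t x (allA G)) @ \oo --> xhat v x),
      (forall g : G,
         (fun t => Pt p t (ind [set g]%SET) (allA G)) @ \oo --> v g / #|G|%:R),
      rhoA p = bhat p v / (#|G|%:R * btot p) &
      rhoa p = bhat p v / (#|G|%:R * btot p)].
Proof.
move=> G_gt0 p_ge0 p_sum1 fixation v_repro; split.
- exact: Pt_allA_cvg.
- by move=> g; rewrite -xhat_ind1; apply: Pt_allA_cvg.
- exact: rhoA_eq.
- exact: rhoa_eq.
Qed.
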